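(* Let $A$ be a nonempty subset of a real vector space $X$, and let $\{A_i\}_{i\in I}$ be the convex components of $A$, i.e. the pairwise distinct maximal convex subsets of $A$ (whose union is $A$). Then $$int_c(A)=\bigcup_{i\in I}cor(A_i).$$
   Context: For $A\subseteq X$, $cor(A):=\{x\in A:\ \forall x'\in X\ \exists \lambda'>0 \text{ such that } x+\lambda x'\in A \text{ for all } \lambda\in[0,\lambda']\}$. The core convex topology $\tau_c$ on $X$ is the topology whose open sets are exactly the unions of families of sets $B\subseteq X$ that are convex and satisfy $cor(B)=B$. $int_c(A)$ denotes the interior of $A$ with respect to $\tau_c$. *)

From HB Require Import structures.
From mathcomp Require Import all_boot all_order all_algebra.
From mathcomp Require Import all_classical all_reals.
From mathcomp Require Import topology convex.
Set Implicit Arguments. Unset Strict Implicit. Unset Printing Implicit Defensive.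
Import Order.TTheory GRing.Theory Num.Theory.
Local Open Scope ring_scope.
Local Open Scope classical_set_scope.

Section CoreConvex.
Variables (R : realType) (X : lmodType R).

Definition cor (A : set X) : set X :=
  [set x | A x /\ forall x' : X, exists2 l' : R, 0 < l' &
             forall l : R, 0 <= l <= l' -> A (x + l *: x')].

Definition convex (A : set X) : Prop := convex_set (A : set (convex_lmodType X)).

Definition tau_c_open (U : set X) : Prop :=
  exists F : set (set X),
    (forall B, F B -> convex B /\ cor B = B) /\ U = \bigcup_(B in F) B.

Definition int_c (A : set X) : set X :=
  [set x | exists U : set X, [/\ tau_c_open U, U `<=` A & U x]].

Definition convex_components (A : set X) : set (set X) :=
  [set C | [/\ convex C, C `<=` A &
             forall D : set X, convex D -> D `<=` A -> C `<=` D -> D = C]].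

End CoreConvex.

(** The core of a convex set [C] is convex and equal to its own core, so it is
    [tau_c]-open; hence [cor C] lies in [int_c A] whenever [C] is a convex
    component of [A].  Conversely, a point of [int_c A] lies in a convex set
    [B] included in [A] with [cor B = B].  By Zorn's lemma [B] is contained in
    a convex component [C] of [A], and [cor] is monotone, so the point lies in
    [cor C]. *)

From HB Require Import structures.
From mathcomp Require Import all_boot all_order all_algebra.
From mathcomp Require Import all_classical all_reals.
From mathcomp Require Import topology convex interval_inference.
From mathcomp Require Import lra.
Set Implicit Arguments. Unset Strict Implicit. Unset Printing Implicit Defensive.
Import Order.TTheory GRing.Theory Num.Theory.
Local Open Scope ring_scope.
Local Open Scope classical_set_scope.

Section CoreConvex.
Variables (R : realType) (X : lmodType R).
Implicit Types (A B C : set X).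

Lemma convexP C :
  convex C <-> forall x y (t : R), 0 <= t -> t <= 1 -> C x -> C y ->
    C (t *: x + (1 - t) *: y).
Proof.
split=> [cC x y t t0 t1 Cx Cy | cC x y t xC yC].
  exact/set_mem/(cC x y (Itv01 t0 t1) (mem_set Cx) (mem_set Cy)).
exact/mem_set/(cC x y t%:num (ge0 t) (le1 t) (set_mem xC) (set_mem yC)).
Qed.

Lemma cor_subset C : cor C `<=` C.
Proof. by move=> x []. Qed.

Lemma subset_cor B C : B `<=` C -> cor B `<=` cor C.
Proof.
move=> BC x [Bx Bcor]; split=> [|w]; first exact: BC.
by have [l l0 Bl] := Bcor w; exists l => // m /Bl/BC.
Qed.

Lemma cor_segment C x y (s : R) : convex C -> cor C x -> C y ->
  0 < s -> s <= 1 -> cor C (s *: x + (1 - s) *: y).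
Proof.
move=> /convexP cC [Cx xcor] Cy s0 s1; split; first exact: cC (ltW s0) s1 Cx Cy.
move=> w; have [m m0 Cm] := xcor w.
exists (s * m) => [|l /andP[l0 lsm]]; first exact: mulr_gt0.
have Cxw : C (x + (l / s) *: w).
  by apply: Cm; rewrite divr_ge0 ?(ltW s0) //= ler_pdivrMr // mulrC.
have -> : s *: x + (1 - s) *: y + l *: w =
          s *: (x + (l / s) *: w) + (1 - s) *: y.
  by rewrite scalerDr scalerA mulrC divfK ?gt_eqF // addrAC.
exact: cC (ltW s0) s1 Cxw Cy.
Qed.

Lemma convex_cor C : convex C -> convex (cor C).
Proof.
move=> cC; apply/convexP => x y t t0 t1 xcor ycor.
have [->|t_neq0] := eqVneq t 0; first by rewrite scale0r add0r subr0 scale1r.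
by apply: cor_segment => //; [exact: cor_subset | rewrite lt_def t_neq0].
Qed.

Lemma cor_idem C : convex C -> cor (cor C) = cor C.
Proof.
move=> cC; apply/seteqP; split=> [|x xcor]; first exact: cor_subset.
split=> // w; have [m m0 Cm] := xcor.2 w.
have Cxmw : C (x + m *: w) by apply: Cm; rewrite lexx ltW.
(* for [l <= m / 2], [x + l w] is a combination of [x] and [x + m w] giving
   [x] a weight at least [1/2] *)
exists (m / 2) => [|l /andP[l0 lm]]; first exact: divr_gt0.
have lm_ge0 : 0 <= l / m by rewrite divr_ge0 // ltW.
have lm_le : l / m <= 1 / 2 by rewrite ler_pdivrMr // mulrC mul1r.
have -> : x + l *: w = (1 - l / m) *: x + (1 - (1 - l / m)) *: (x + m *: w).
  by rewrite subKr scalerDr addrA -scalerDl subrK scale1r scalerA divfK ?gt_eqF.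
by apply: cor_segment => //; lra.
Qed.

Lemma tau_c_open_cor C : convex C -> tau_c_open (cor C).
Proof.
move=> cC; exists [set cor C]; split; last by rewrite bigcup_set1.
by move=> _ ->; split; [exact: convex_cor | exact: cor_idem].
Qed.

Lemma convex_bigcup_chain (I : Type) (P : set I) (F : I -> set X) :
  (forall i, P i -> convex (F i)) ->
  (forall i j, P i -> P j -> F i `<=` F j \/ F j `<=` F i) ->
  convex (\bigcup_(i in P) F i).
Proof.
move=> Fcvx Fchain; apply/convexP => x y t t0 t1 [i Pi Fix] [j Pj Fjy].
have [Fij|Fji] := Fchain i j Pi Pj.
- by exists j => //; apply: (convexP _).1 (Fcvx j Pj) _ _ _ t0 t1 (Fij _ Fix) Fjy.
- by exists i => //; apply: (convexP _).1 (Fcvx i Pi) _ _ _ t0 t1 Fix (Fji _ Fjy).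
Qed.

(* Zorn's lemma is applied to the sets [D] with [B `|` D] convex and included
   in [A]: the empty set is among them, so the empty chain has an upper bound. *)
Lemma convex_components_sup A B : convex B -> B `<=` A ->
  exists2 C, convex_components A C & B `<=` C.
Proof.
move=> cB BA.
pose P := [set D | convex (B `|` D) /\ B `|` D `<=` A].
have [F FP Fchain|D [[cBD BDA] Dmax]] := @Zorn_bigcup X P.
  rewrite /P /=.
  have -> : B `|` \bigcup_(E in F) E = \bigcup_(E in set0 |` F) (B `|` E).
    by rewrite bigcupUr ?bigcup_setU1 ?set0U //; exists set0; left.
  split=> [|x [E [->|FE]]]; last 2 first.
  - by rewrite setU0; apply: BA.
  - exact: (FP E FE).2.
  apply: convex_bigcup_chain => [E [->|/FP[]//]|E E' FE FE']; first by rewrite setU0.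
  have [EE'|E'E] : E `<=` E' \/ E' `<=` E.
    by case: FE FE' => [->|FE] [->|FE']; [left|left|right|exact: Fchain].
  - by left; apply: setUS.
  - by right; apply: setUS.
exists (B `|` D); last exact: subsetUl.
split=> // E cE EA BDE.
have BE : B `|` E = E by apply/setUidPr => x Bx; apply: BDE; left.
apply/seteqP; split=> //; apply: contrapT => nEBD.
apply: (Dmax E); last by rewrite /P /= BE.
split=> [x Dx|ED]; first by apply: BDE; right.
by apply: nEBD => x /ED Dx; right.
Qed.

End CoreConvex.

Theorem theorem3p8 (R : realType) (X : lmodType R) (A : set X) :
  A !=set0 ->
  int_c A = \bigcup_(C in convex_components A) cor C.
Proof.
move=> _; apply/seteqP; split.
  move=> x [_ [[F [Fcor ->]] FA [B FB Bx]]].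
  have [cB corB] := Fcor B FB.
  have BA : B `<=` A by move=> y By; apply: FA; exists B.
  have [C compC BC] := convex_components_sup cB BA.
  by exists C => //; apply: subset_cor BC _ _; rewrite corB.
move=> x [C [cC CA _] xcor]; exists (cor C); split=> //.
- exact: tau_c_open_cor.
- by move=> y /cor_subset/CA.
Qed.
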